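(* Let $G$ be a finite group of odd order $n$ and let $Z_2 = \{0,1\}$ be the near-ring with addition modulo $2$ and multiplication $a\cdot b = a$ for all $a,b \in Z_2$. Then the group near-ring $Z_2G$ has a subnear-ring $S \neq \{0\}$ which is a Boolean near-ring (i.e. $x\cdot x = x$ for all $x \in S$).
   Context: The group near-ring $Z_2G$ consists of all formal sums $\sum_{g \in G} \alpha(g) g$ with $\alpha(g) \in Z_2$; addition is coefficientwise, and the product of $\alpha = \sum_{g \in \operatorname{supp}\alpha} \alpha(g) g$ and $\beta = \sum_{h \in \operatorname{supp}\beta} \beta(h) h$ (where $\operatorname{supp}$ denotes the set of group elements with nonzero coefficient) is $\sum_{g \in \operatorname{supp}\alpha,\, h\in\operatorname{supp}\beta} (\alpha(g)\cdot\beta(h))\, gh$, like terms being collected by addition in $Z_2$. A subnear-ring is a subset that is a subgroup under addition and closed under multiplication. *)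

From mathcomp Require Import all_boot all_fingroup.
Set Implicit Arguments. Unset Strict Implicit. Unset Printing Implicit Defensive.

(* The near-ring Z_2 = {0,1}: carrier bool (false = 0, true = 1),
   addition modulo 2 (xor), multiplication a . b = a. *)
Definition z2add (a b : bool) : bool := addb a b.
Definition z2mul (a b : bool) : bool := a.
Definition z2opp (a : bool) : bool := a.

Section GroupNearRing.
Variable gT : finGroupType.

(* Elements of Z_2 G: formal sums, i.e. coefficient functions G -> Z_2. *)
Definition Z2G := {ffun gT -> bool}.

Definition gnr0 : Z2G := [ffun _ => false].
Definition gnr_add (a b : Z2G) : Z2G := [ffun g => z2add (a g) (b g)].
Definition gnr_opp (a : Z2G) : Z2G := [ffun g => z2opp (a g)].

Definition supp (a : Z2G) : {set gT} := [set g | a g != false].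

Definition gnr_mul (a b : Z2G) : Z2G :=
  [ffun k => \big[z2add/false]_(g in supp a) \big[z2add/false]_(h in supp b)
               (if (g * h)%g == k then z2mul (a g) (b h) else false)].

Definition subnear_ring (S : {set Z2G}) : Prop :=
  [/\ gnr0 \in S,
      forall x y, x \in S -> y \in S -> gnr_add x y \in S,
      forall x, x \in S -> gnr_opp x \in S &
      forall x y, x \in S -> y \in S -> gnr_mul x y \in S].

Definition boolean_near_ring (S : {set Z2G}) : Prop :=
  forall x, x \in S -> gnr_mul x x = x.

End GroupNearRing.

From mathcomp Require Import all_boot all_fingroup.

(* For any idempotent e of Z_2 G, the pair {0, e} is a Boolean subnear-ring,
   since Z_2 G has characteristic 2 and 0 is absorbing on both sides.  The
   sum e of all group elements is idempotent when |G| is odd: in e * e every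
   k in G arises exactly once as g * (g^-1 k) for each of the |G| choices of
   g, so its coefficient is |G| mod 2 = 1. *)

Section GroupNearRing.
Variable gT : finGroupType.
Implicit Types (a e : Z2G gT) (A : {set gT}).

Lemma big_addb_true A : \big[addb/false]_(g in A) true = odd #|A|.
Proof. by rewrite big_const; elim: #|A| => //= n ->. Qed.

Lemma gnr_add0l a : gnr_add (gnr0 gT) a = a.
Proof. by apply/ffunP=> g; rewrite !ffunE. Qed.

Lemma gnr_addr0 a : gnr_add a (gnr0 gT) = a.
Proof. by apply/ffunP=> g; rewrite !ffunE /z2add addbF. Qed.

Lemma gnr_addxx a : gnr_add a a = gnr0 gT.
Proof. by apply/ffunP=> g; rewrite !ffunE /z2add addbb. Qed.

Lemma gnr_oppE a : gnr_opp a = a.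
Proof. by apply/ffunP=> g; rewrite ffunE. Qed.

Lemma supp_gnr0 : supp (gnr0 gT) = set0.
Proof. by apply/setP=> g; rewrite !inE ffunE. Qed.

Lemma gnr_mul0l a : gnr_mul (gnr0 gT) a = gnr0 gT.
Proof. by apply/ffunP=> k; rewrite !ffunE supp_gnr0 big_set0. Qed.

Lemma gnr_mul0r a : gnr_mul a (gnr0 gT) = gnr0 gT.
Proof.
apply/ffunP=> k; rewrite !ffunE /z2add; apply: big1 => g _.
by rewrite supp_gnr0 big_set0.
Qed.

Section IdempotentPair.
Variable e : Z2G gT.
Hypothesis e_idem : gnr_mul e e = e.

Let pair_cases x : x \in [set gnr0 gT; e] -> x = gnr0 gT \/ x = e.
Proof. by rewrite !inE => /orP[] /eqP; [left | right]. Qed.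

Lemma subnear_ring_pair : subnear_ring [set gnr0 gT; e].
Proof.
split=> [|x y|x|x y]; first by rewrite !inE eqxx.
- move=> /pair_cases[]-> /pair_cases[]->;
    by rewrite ?gnr_add0l ?gnr_addr0 ?gnr_addxx !inE eqxx ?orbT.
- by rewrite gnr_oppE.
- move=> /pair_cases[]-> /pair_cases[]->;
    by rewrite ?gnr_mul0l ?gnr_mul0r ?e_idem !inE eqxx ?orbT.
Qed.

Lemma boolean_near_ring_pair : boolean_near_ring [set gnr0 gT; e].
Proof. by move=> x /pair_cases[]->; rewrite ?gnr_mul0l. Qed.

End IdempotentPair.

Lemma pair_neq_set1 e : e != gnr0 gT -> [set gnr0 gT; e] != [set gnr0 gT].
Proof.
move=> e_neq0; apply/eqP=> /setP /(_ e).
by rewrite !inE eqxx orbT (negbTE e_neq0).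
Qed.

Definition gnr_ones : Z2G gT := [ffun _ => true].

Lemma supp_gnr_ones : supp gnr_ones = [set: gT].
Proof. by apply/setP=> g; rewrite !inE ffunE. Qed.

Lemma gnr_ones_neq0 : gnr_ones != gnr0 gT.
Proof. by apply/eqP=> /ffunP /(_ 1%g); rewrite !ffunE. Qed.

Lemma big_addb_mulg_eq g k :
  \big[addb/false]_(h in [set: gT]) ((g * h)%g == k) = true.
Proof.
rewrite (bigD1 (g^-1 * k)%g) ?inE //= mulKVg eqxx big1 // => h /andP[_].
by apply: contraNF => /eqP <-; rewrite mulKg.
Qed.

Lemma gnr_mul_ones : gnr_mul gnr_ones gnr_ones = [ffun _ => odd #|[set: gT]|].
Proof.
apply/ffunP=> k; rewrite !ffunE supp_gnr_ones -big_addb_true.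
apply: eq_bigr => g _; rewrite -[RHS](big_addb_mulg_eq g k).
by apply: eq_bigr => h _; rewrite ffunE; case: eqP.
Qed.

End GroupNearRing.

Theorem theorem3p5p6 (gT : finGroupType) (hodd : odd #|[set: gT]|) :
  exists S : {set Z2G gT},
    [/\ subnear_ring S, S != [set gnr0 gT] & boolean_near_ring S].
Proof.
have ones_idem : gnr_mul (gnr_ones gT) (gnr_ones gT) = gnr_ones gT.
  by rewrite gnr_mul_ones hodd.
exists [set gnr0 gT; gnr_ones gT]; split.
- exact: subnear_ring_pair.
- exact/pair_neq_set1/gnr_ones_neq0.
- exact: boolean_near_ring_pair.
Qed.
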